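(* Let $\mathbf{X}=\{X_n\}_{n\ge0}$ be a real-valued integrable process adapted to a filtration $\{\mathcal{F}_n\}_{n\ge0}$ satisfying (D1), (D4), (A3) and (A4). Then $X_n$ possesses a finite limit a.e. If in addition $\mathbf{X}$ satisfies (D2), then $X_n\to0$ a.e.
   Context: Residuals: $\epsilon_n=X_n-E[X_n\mid\mathcal{F}_{n-1}]$, $n\ge1$; $M_{1,n}=\sum_{i=1}^n\epsilon_i$. $U_n=E[X_n\mid\mathcal{F}_{n-1}]\,I\{X_{n-1}=0\}$. (D1) For every $\delta>0$ there are constants $\alpha_n(\delta)\ge0$ with $\sum_n\alpha_n(\delta)<\infty$ such that, a.e. on $\{|X_{n-1}|>\delta\}$, $0\le E[X_n\mid\mathcal{F}_{n-1}]/X_{n-1}\le1+\alpha_n(\delta)$, for all $n\ge1$. (D2) For every pair $0<\delta_1<\delta_2<\infty$ there are constants $0\le k_n\le1$ (depending on $\delta_1,\delta_2$) with $\sum_n(1-k_n)=\infty$ such that, a.e. on $\{|X_{n-1}|\in(\delta_1,\delta_2)\}$, $0\le E[X_n\mid\mathcal{F}_{n-1}]/X_{n-1}\le k_n$, for all $n\ge1$. (D4) For every $\delta>0$ there is a constant $\kappa_\delta<\infty$ such that $|E[X_n\mid\mathcal{F}_{n-1}]|\le\kappa_\delta$ a.e. on $\{|X_{n-1}|\in(0,\delta]\}$ for all $n\ge1$, and $\lim_{\delta\downarrow0}\kappa_\delta=0$. (A3) $\lim_n U_n=0$ a.e. (A4) $M_{1,n}$ possesses a finite limit a.e. *)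

From HB Require Import structures.
From mathcomp Require Import all_boot all_order all_algebra.
From mathcomp Require Import all_classical all_reals all_analysis.
Set Implicit Arguments. Unset Strict Implicit. Unset Printing Implicit Defensive.
Import Order.TTheory GRing.Theory Num.Theory.
Import numFieldNormedType.Exports.
Local Open Scope classical_set_scope.
Local Open Scope ring_scope.

Definition sub_sigma_algebra d (T : measurableType d) (G : set (set T)) :=
  sigma_algebra setT G /\ G `<=` measurable.

Definition filtration d (T : measurableType d) (F : nat -> set (set T)) :=
  (forall n, sub_sigma_algebra (F n)) /\ (forall n A, F n A -> F n.+1 A).

Definition G_measurable d (T : measurableType d) (R : realType)
  (G : set (set T)) (f : T -> R) :=
  forall B : set R, measurable B -> G (f @^-1` B).

Definition is_cond_exp d (T : measurableType d) (R : realType)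
  (P : probability T R) (G : set (set T)) (X Y : T -> R) :=
  [/\ G_measurable G Y, P.-integrable setT (EFin \o Y) &
      forall A, G A ->
        (\int[P]_(x in A) (Y x)%:E = \int[P]_(x in A) (X x)%:E)%E].

From HB Require Import structures.
From mathcomp Require Import all_boot all_order all_algebra.
From mathcomp Require Import all_classical all_reals all_analysis.
From mathcomp Require Import ring lra zify.
Set Implicit Arguments. Unset Strict Implicit. Unset Printing Implicit Defensive.
Import Order.TTheory GRing.Theory Num.Theory.
Import numFieldNormedType.Exports.
Local Open Scope classical_set_scope.
Local Open Scope ring_scope.

(* Everything happens along one trajectory x_n = X_n(w), with drift
   c_n = E[X_n | F_(n-1)](w) and convergent noise s_n = M_(1,n)(w), so that
   x_n = c_n + (s_n - s_(n-1)).  While x stays above some delta > 0, (D1) lets x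
   grow at most by factors 1 + alpha_n with summable alpha_n; a discrete
   Gronwall estimate bounds x by some B, and then x - s - B * (sum of alpha) is
   nonincreasing and bounded below, hence convergent.  If x comes back below
   every delta > 0 infinitely often, consider the last visit below a small delta
   before time n: by (D4) and (A3) the next drift is small, and the same Gronwall
   estimate keeps the whole following excursion small, so limsup x <= 0.
   Applying this to -x as well gives convergence.  Finally, if x tends to
   L > 0, (D2) makes x - s drop by (1 - k_n) L / 2 at each step, contradicting
   sum (1 - k_n) = +oo.  Almost-sure statements follow by intersecting countably
   many full-measure sets, delta ranging over 1 / (m + 1). *)

(* [lia] becomes very slow when many real inequalities are in context. *)
Ltac nat_lia :=
  repeat match goal with
  | H : is_true (@Order.le _ _ _ _) |- _ => clear H
  | H : is_true (@Order.lt _ _ _ _) |- _ => clear H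
  end; lia.

Lemma cvgn_cauchy (R : realFieldType) (u : R ^nat) : cvgn u ->
  forall e : R, 0 < e -> exists N, forall p q, (N <= p)%N -> (N <= q)%N ->
    `|u p - u q| <= e.
Proof.
move=> /cvg_ex[l /cvgrPdist_le ul] e e0.
have e20 : 0 < e / 2 by rewrite divr_gt0.
have [N _ HN] := ul (e / 2) e20.
exists N => p q Np Nq; have := HN p Np; have := HN q Nq; rewrite /= => hq hp.
have -> : u p - u q = (l - u q) - (l - u p) by ring.
by apply: le_trans (ler_normB _ _) _; lra.
Qed.

Lemma is_cvg_shiftn (T : ptopologicalType) (u : T ^nat) K :
  cvgn (fun n => u (n + K)%N) = cvgn u.
Proof.
by rewrite propeqE; split => /cvg_ex[l ul]; apply/cvg_ex; exists l;
  [rewrite -(cvg_shiftn K) | rewrite (cvg_shiftn K)].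
Qed.

Lemma cvgn_ex_bound (R : realType) (u : R ^nat) : cvgn u ->
  exists M, forall n, `|u n| <= M.
Proof.
move=> /cvg_seq_bounded[M [_ hM]]; exists (M + 1) => n.
by apply: hM => //; rewrite ltrDl.
Qed.

Lemma cvgn_sum_nneseries_lt_pinfty (R : realType) (a : R ^nat) :
  (forall n, 0 <= a n) -> (\sum_(1 <= n <oo) (a n)%:E < +oo)%E ->
  cvgn (fun n => \sum_(1 <= k < n.+1) a k).
Proof.
move=> a0 afin; apply: nondecreasing_is_cvgn.
  by apply/nondecreasing_seqP => n; rewrite [leRHS]big_nat_recr //= lerDl.
have sum0 : (0 <= \sum_(1 <= n <oo) (a n)%:E)%E.
  by apply: nneseries_ge0 => n _ _; rewrite lee_fin.
exists (fine (\sum_(1 <= n <oo) (a n)%:E)) => _ [n _ <-].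
rewrite -lee_fin fineK ?ge0_fin_numE // -sumEFin.
by apply: nneseries_lim_ge => k _ _; rewrite lee_fin.
Qed.

Lemma nneseries_tail_le (R : realType) (a : R ^nat) :
  (forall n, 0 <= a n) -> (\sum_(1 <= n <oo) (a n)%:E < +oo)%E ->
  forall e, 0 < e -> exists N, forall m n, (N <= m)%N -> (m <= n)%N ->
    \sum_(m.+1 <= k < n.+1) a k <= e.
Proof.
move=> a0 afin e e0.
have [N HN] := cvgn_cauchy (cvgn_sum_nneseries_lt_pinfty a0 afin) e0.
exists N => m n Nm mn.
have -> : \sum_(m.+1 <= k < n.+1) a k =
    \sum_(1 <= k < n.+1) a k - \sum_(1 <= k < m.+1) a k.
  by rewrite (big_cat_nat _ (n := m.+1) (m := 1%N) (p := n.+1)) //= addrAC subrr add0r.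
by apply: le_trans (ler_norm _) (HN n m _ Nm); apply: leq_trans mn.
Qed.

Lemma nneseries_lt_pinfty_of_tail_bounded (R : realType) (a : R ^nat) N (B : R) :
  (forall n, 0 <= a n) -> (forall t, \sum_(N.+1 <= k < (N + t).+1) a k <= B) ->
  (\sum_(1 <= n <oo) (a n)%:E < +oo)%E.
Proof.
move=> a0 aB; apply: le_lt_trans (ltry (\sum_(1 <= k < N.+1) a k + B)).
apply: lime_le; first by apply: is_cvg_nneseries => n _ _; rewrite lee_fin.
apply: nearW => n; rewrite sumEFin lee_fin.
apply: (@le_trans _ _ (\sum_(1 <= k < (N + n).+1) a k)).
  case: n => [|n]; first by rewrite big_geq // sumr_ge0.
  by rewrite [leRHS](big_cat_nat _ (n := n.+1)) //= ?lerDl ?sumr_ge0 //; lia.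
by rewrite (big_cat_nat _ (n := N.+1)) //= ?lerD2l //; lia.
Qed.

Lemma frequently_le_of_not_eventually_gt (R : realDomainType) (u : R ^nat) :
  ~ (exists delta N, 0 < delta /\ forall n, (N <= n)%N -> delta < u n) ->
  forall delta, 0 < delta -> forall N, exists2 n, (N <= n)%N & u n <= delta.
Proof.
move=> not_gt delta d0 N; apply: contrapT => never; apply: not_gt.
exists delta, N; split => // n Nn; rewrite ltNge; apply/negP => un.
by apply: never; exists n.
Qed.

Lemma ex_last_index (p : pred nat) (m n : nat) : (m <= n)%N -> p m ->
  exists j, [/\ (m <= j <= n)%N, p j & forall k, (j < k <= n)%N -> ~~ p k].
Proof.
move=> mn pm; rewrite -(subnKC mn); elim: (n - m)%N => [|t [j [hj pj after]]].
  by exists m; split; rewrite ?addn0 ?leqnn //; lia.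
case pt: (p (m + t.+1)%N); first by exists (m + t.+1)%N; split => //; lia.
exists j; split => //; first by lia.
move=> k hk; have [->|ne] := eqVneq k (m + t.+1)%N; first by rewrite pt.
by apply: after; lia.
Qed.

Lemma discrete_gronwall (R : realFieldType) (v a : R ^nat) (eta : R) (m b : nat) :
  0 <= eta -> (forall k, 0 <= a k) -> (m <= b)%N ->
  \sum_(m.+1 <= k < b.+1) a k <= 1/4 ->
  (forall k, (m < k <= b)%N -> v k <= (1 + a k) * v k.-1 + a k * eta) ->
  v b <= 2 * (Num.max (v m) 0 + eta).
Proof.
move=> eta0 a0 mb Sb step.
set W := Num.max (v m) 0 + eta.
have vm_max : v m <= Num.max (v m) 0 by rewrite le_max lexx.
have max0 : 0 <= Num.max (v m) 0 by rewrite le_max lexx orbT.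
have etaW : eta <= W by rewrite /W; lra.
have vmW : v m <= W by rewrite /W; lra.
suff inv j : (m + j <= b)%N ->
    v (m + j)%N <= (1 + 4 * \sum_(m.+1 <= k < (m + j).+1) a k) * W.
  have := inv (b - m)%N; rewrite subnKC // => /(_ (leqnn b)) vb.
  by apply: le_trans vb _; rewrite ler_wpM2r //; lra.
elim: j => [|j IH] hj; first by rewrite addn0 big_geq // mulr0 addr0 mul1r.
have {}IH := IH ltac:(lia).
rewrite addnS big_nat_recr /=; last by lia.
set S := \sum_(m.+1 <= k < (m + j).+1) a k in IH *.
set A := a (m + j).+1.
have S0 : 0 <= S by apply: sumr_ge0 => k _.
have A0 : 0 <= A := a0 _.
have SA : S + A <= 1/4.
  apply: le_trans Sb; rewrite -big_nat_recr /=; last by lia.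
  rewrite [leRHS](big_cat_nat _ (n := (m + j).+2)) /=; [|lia|lia].
  by rewrite lerDl sumr_ge0.
have stepA : v (m + j).+1 <= (1 + A) * v (m + j)%N + A * eta.
  by apply: step; lia.
have h1 : (1 + A) * v (m + j)%N <= (1 + A) * ((1 + 4 * S) * W).
  by rewrite ler_wpM2l //; lra.
have h2 : A * eta <= A * W by rewrite ler_wpM2l.
have : 0 <= A * W * (2 - 4 * S) by rewrite !mulr_ge0 //; lra.
nra.
Qed.

Lemma excursion_bound (R : realFieldType) (x c s al : R ^nat) (eta : R) (a b : nat) :
  0 <= eta -> (forall k, 0 <= al k) -> (a <= b)%N ->
  \sum_(a.+1 <= k < b.+1) al k <= 1/4 ->
  (forall k, (a < k <= b)%N -> x k = c k + (s k - s k.-1)) ->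
  (forall k, (a < k <= b)%N -> c k <= (1 + al k) * x k.-1) ->
  (forall k, (a <= k <= b)%N -> `|s k - s a| <= eta) ->
  x b <= 2 * (Num.max (x a) 0 + eta) + eta.
Proof.
move=> eta0 al0 ab Sb hx hc hs.
have s_le k : (a <= k <= b)%N -> s k - s a <= eta.
  by move=> /hs; apply: le_trans (ler_norm _).
pose v k := x k - (s k - s a).
have va : v a = x a by rewrite /v subrr subr0.
suff : v b <= 2 * (Num.max (x a) 0 + eta).
  by have := s_le b; rewrite ab leqnn /v => /(_ isT); lra.
rewrite -va; apply: discrete_gronwall => // k hk.
have := s_le k.-1 ltac:(lia); have := hc k hk; have := hx k hk.
have alk := al0 k; rewrite /v; nra.
Qed.

Section trajectory.
Context (R : realType).
Implicit Types (x c s : R ^nat) (delta : R).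

(* (D1), (D4), (A3) and (D2) along a single trajectory x with drift c. *)
Definition nonexpansive_above x c delta :=
  exists alpha : R ^nat, (forall n, 0 <= alpha n) /\
    (\sum_(1 <= n <oo) (alpha n)%:E < +oo)%E /\
    forall n, (0 < n)%N -> delta < `|x n.-1| -> 0 <= c n / x n.-1 <= 1 + alpha n.

Definition almost_nonexpansive x c :=
  forall delta, 0 < delta -> nonexpansive_above x c delta.

Definition drift_small_near0 x c := forall e : R, 0 < e ->
  exists2 delta, 0 < delta &
    forall n, (0 < n)%N -> 0 < `|x n.-1| <= delta -> `|c n| <= e.

Definition drift_vanishes_at0 x c := (fun n => c n.+1 * (x n == 0)%:R) @ \oo --> 0.

Definition contracting_between x c delta1 delta2 :=
  exists k : R ^nat, (forall n, 0 <= k n <= 1) /\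
    (\sum_(1 <= n <oo) (1 - k n)%:E = +oo)%E /\
    forall n, (0 < n)%N -> delta1 < `|x n.-1| < delta2 -> 0 <= c n / x n.-1 <= k n.

Definition contracting x c := forall delta1 delta2,
  0 < delta1 -> delta1 < delta2 -> contracting_between x c delta1 delta2.

Definition drift_plus_noise x c s :=
  forall k, (0 < k)%N -> x k = c k + (s k - s k.-1).

Lemma drift_plus_noise_sum x c :
  drift_plus_noise x c (fun n => \sum_(1 <= i < n.+1) (x i - c i)).
Proof. by move=> [|k] // _; rewrite big_nat_recr //=; ring. Qed.

Lemma drift_plus_noiseN x c s : drift_plus_noise x c s ->
  drift_plus_noise (- x) (- c) (- s).
Proof. by move=> hx k k0; rewrite !fctE hx //; ring. Qed.

Lemma almost_nonexpansiveN x c : almost_nonexpansive x c ->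
  almost_nonexpansive (- x) (- c).
Proof.
move=> h delta d0; have [al [al0 [alfin H]]] := h delta d0.
by exists al; do 2!split => //; move=> n n0; rewrite !fctE normrN invrN mulrNN; apply: H.
Qed.

Lemma drift_small_near0N x c : drift_small_near0 x c ->
  drift_small_near0 (- x) (- c).
Proof.
move=> h e e0; have [delta d0 H] := h e e0.
by exists delta => // n n0; rewrite !fctE !normrN; apply: H.
Qed.

Lemma drift_vanishes_at0N x c : drift_vanishes_at0 x c ->
  drift_vanishes_at0 (- x) (- c).
Proof.
rewrite /drift_vanishes_at0 => h.
have -> : (fun n => (- c) n.+1 * ((- x) n == 0)%:R) =
    - (fun n => c n.+1 * (x n == 0)%:R).
  by apply/funext => n /=; rewrite -mulNr eqr_oppLR oppr0.
by move/cvgN: h; rewrite oppr0.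
Qed.

Lemma contractingN x c : contracting x c -> contracting (- x) (- c).
Proof.
move=> h d1 d2 d10 d12; have [k [k01 [kinf H]]] := h d1 d2 d10 d12.
by exists k; do 2!split => //; move=> n n0; rewrite !fctE normrN invrN mulrNN; apply: H.
Qed.

Lemma eventually_bounded_above x c s (al : R ^nat) N :
  (forall k, 0 <= al k) -> (\sum_(1 <= n <oo) (al n)%:E < +oo)%E ->
  drift_plus_noise x c s -> cvgn s ->
  (forall k, (N < k)%N -> c k <= (1 + al k) * x k.-1) ->
  exists2 K, (N <= K)%N & exists B, forall n, (K <= n)%N -> x n <= B.
Proof.
move=> al0 alfin hx cs hc.
have [N1 HN1] := nneseries_tail_le al0 alfin (ltac:(lra) : 0 < 1/4 :> R).
have [N2 HN2] := cvgn_cauchy cs ltr01.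
exists (N + N1 + N2)%N; first by nat_lia.
exists (2 * (Num.max (x (N + N1 + N2)%N) 0 + 1) + 1) => n Kn.
apply: (excursion_bound (c := c) (s := s) (al := al)) => //.
- by apply: HN1; nat_lia.
- by move=> k /andP[Kk _]; apply: hx; nat_lia.
- by move=> k /andP[Kk _]; apply: hc; nat_lia.
- by move=> k /andP[Kk _]; apply: HN2; nat_lia.
Qed.

Lemma cvgn_eventually_nonneg x c s (al : R ^nat) N :
  (forall k, 0 <= al k) -> (\sum_(1 <= n <oo) (al n)%:E < +oo)%E ->
  drift_plus_noise x c s -> cvgn s ->
  (forall k, (N < k)%N -> c k <= (1 + al k) * x k.-1) ->
  (forall n, (N <= n)%N -> 0 <= x n) -> cvgn x.
Proof.
move=> al0 alfin hx cs hc x0.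
have [K NK [B xB]] := eventually_bounded_above al0 alfin hx cs hc.
have B0 : 0 <= B by apply: le_trans (x0 K NK) (xB K _).
pose A n := \sum_(1 <= k < n.+1) al k.
have cA : cvgn A := cvgn_sum_nneseries_lt_pinfty al0 alfin.
pose z n := x (n + K)%N - s (n + K)%N - B * A (n + K)%N.
have z_noninc : nonincreasing_seq z.
  apply/nonincreasing_seqP => n.
  have AS : A (n + K).+1 = A (n + K)%N + al (n + K).+1 by rewrite /A big_nat_recr.
  rewrite /z addSn AS hx //.
  have := hc (n + K).+1 ltac:(nat_lia); rewrite /=.
  have : al (n + K).+1 * x (n + K)%N <= B * al (n + K).+1.
    by rewrite [leRHS]mulrC ler_wpM2l //; apply: xB; nat_lia.
  lra.
have z_lb : has_lbound (range z).
  have [Ms hMs] := cvgn_ex_bound cs; have [MA hMA] := cvgn_ex_bound cA.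
  exists (- Ms - B * MA) => _ [n _ <-].
  have := x0 (n + K)%N ltac:(nat_lia); have := hMs (n + K)%N.
  have : B * A (n + K)%N <= B * MA.
    by apply: ler_wpM2l => //; apply: le_trans (ler_norm _) (hMA _).
  have := ler_norm (s (n + K)%N); rewrite /z; lra.
rewrite -(is_cvg_shiftn _ K).
have -> : (fun n => x (n + K)%N) = z \+ (fun n => s (n + K)%N + B * A (n + K)%N).
  by apply/funext => n; rewrite /z /=; ring.
apply: is_cvgD; first exact: nonincreasing_is_cvgn.
apply: is_cvgD; first by rewrite is_cvg_shiftn.
by apply: is_cvgM; [exact: is_cvg_cst | rewrite is_cvg_shiftn].
Qed.

Lemma cvgn_eventually_gt x c s delta N :
  almost_nonexpansive x c -> drift_plus_noise x c s -> cvgn s -> 0 < delta ->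
  (forall n, (N <= n)%N -> delta < x n) -> cvgn x.
Proof.
move=> hD1 hx cs d0 x_gt; have [al [al0 [alfin Hal]]] := hD1 delta d0.
apply: (cvgn_eventually_nonneg al0 alfin hx cs (N := N)); last first.
  by move=> n /x_gt/(lt_trans d0)/ltW.
move=> k Nk; have xk : delta < x k.-1 by apply: x_gt; nat_lia.
have /andP[_] := Hal k ltac:(nat_lia) (lt_le_trans xk (ler_norm _)).
by rewrite ler_pdivrMr //; apply: lt_trans xk.
Qed.

Lemma drift_next_le x c (d e : R) j :
  0 < e -> nonexpansive_above x c d ->
  (forall n, (0 < n)%N -> 0 < `|x n.-1| <= d -> `|c n| <= e) ->
  (x j = 0 -> c j.+1 <= e) -> x j <= d -> c j.+1 <= e.
Proof.
move=> e0 [al [_ [_ Hal]]] small at0 xj.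
have [x0|x_ne0] := eqVneq (x j) 0; first exact: at0.
have [x_small|x_big] := leP `|x j| d.
  by apply: le_trans (ler_norm _) (small j.+1 isT _); rewrite normr_gt0 x_ne0.
have x_neg : x j < 0.
  by rewrite ltNge; apply/negP => x_ge0; move: x_big; rewrite ger0_norm //; lra.
have /andP[ratio_ge0 _] := Hal j.+1 isT x_big.
have -> : c j.+1 = c j.+1 / x j * x j by rewrite divfK // lt_eqF.
by rewrite (le_trans _ (ltW e0)) // mulr_ge0_le0 // ltW.
Qed.

Lemma eventually_le_of_frequently_le x c s :
  drift_plus_noise x c s -> cvgn s -> almost_nonexpansive x c ->
  drift_small_near0 x c -> drift_vanishes_at0 x c ->
  (forall delta, 0 < delta -> forall N, exists2 n, (N <= n)%N & x n <= delta) ->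
  forall e, 0 < e -> exists N, forall n, (N <= n)%N -> x n <= e.
Proof.
move=> hx cs hD1 hD4 hA3 often e e0.
pose e' := e / 7; have e'0 : 0 < e' by rewrite divr_gt0.
have e7 : 7 * e' = e by rewrite /e'; field.
have [d4 d40 Hd4] := hD4 e' e'0.
pose d := Num.min d4 e'.
have d0 : 0 < d by rewrite lt_min d40.
have de' : d <= e' by rewrite ge_min lexx orbT.
have hd := hD1 d d0; have [al [al0 [alfin Hal]]] := hd.
have [N1 HN1] := nneseries_tail_le al0 alfin (ltac:(lra) : 0 < 1/4 :> R).
have [N2 HN2] := cvgn_cauchy cs e'0.
have [N3 _ HN3] := (cvgrPdist_le _ _).1 hA3 e' e'0.
have [m Km xm] := often d d0 (N1 + N2 + N3)%N.
exists m => n mn.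
(* j is the last time in [m, n] at which x is below d; an excursion follows *)
have [j [/andP[mj jn] xj above]] := ex_last_index (p := fun k => x k <= d) mn xm.
have [<-|jn'] := eqVneq j n; first by lra.
have c_next : c j.+1 <= e'.
  apply: drift_next_le e'0 hd _ _ xj => [k k0 /andP[xk0 xkd]|x0].
    by apply: Hd4 => //; rewrite xk0 (le_trans xkd) // ge_min lexx.
  have N3j : (N3 <= j)%N by nat_lia.
  have := HN3 j N3j; rewrite /= x0 eqxx mulr1 sub0r normrN.
  by apply: le_trans (ler_norm _).
have x_next : x j.+1 <= 2 * e'.
  rewrite hx //=; have := HN2 j.+1 j ltac:(nat_lia) ltac:(nat_lia).
  have := ler_norm (s j.+1 - s j); lra.
have : x n <= 2 * (Num.max (x j.+1) 0 + e') + e'.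
  apply: (excursion_bound (c := c) (s := s) (al := al)) => //.
  - exact: ltW.
  - by nat_lia.
  - by apply: HN1; nat_lia.
  - by move=> k /andP[jk _]; apply: hx; nat_lia.
  - move=> k /andP[jk kn].
    have x_above : d < x k.-1 by have := above k.-1 ltac:(nat_lia); rewrite -ltNge.
    have /andP[_] := Hal k ltac:(nat_lia) (lt_le_trans x_above (ler_norm _)).
    by rewrite ler_pdivrMr //; apply: lt_trans x_above.
  - by move=> k /andP[jk _]; apply: HN2; nat_lia.
have : Num.max (x j.+1) 0 <= 2 * e' by rewrite ge_max x_next /=; lra.
lra.
Qed.

Lemma cvgn_trajectory x c s :
  drift_plus_noise x c s -> cvgn s -> almost_nonexpansive x c ->
  drift_small_near0 x c -> drift_vanishes_at0 x c -> cvgn x.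
Proof.
move=> hx cs hD1 hD4 hA3.
have hxN := drift_plus_noiseN hx; have csN : cvgn (- s) by apply: is_cvgN.
have hD1N := almost_nonexpansiveN hD1.
have [[delta [N [d0 x_gt]]]|not_gt] :=
  pselect (exists delta N, 0 < delta /\ forall n, (N <= n)%N -> delta < x n).
  exact: cvgn_eventually_gt hD1 hx cs d0 x_gt.
have [[delta [N [d0 x_lt]]]|not_lt] :=
  pselect (exists delta N, 0 < delta /\ forall n, (N <= n)%N -> delta < (- x) n).
  by have /is_cvgN := cvgn_eventually_gt hD1N hxN csN d0 x_lt; rewrite opprK.
have ub := eventually_le_of_frequently_le hx cs hD1 hD4 hA3
  (frequently_le_of_not_eventually_gt not_gt).
have lb := eventually_le_of_frequently_le hxN csN hD1N (drift_small_near0N hD4)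
  (drift_vanishes_at0N hA3) (frequently_le_of_not_eventually_gt not_lt).
apply/cvg_ex; exists 0; apply/cvgrPdist_le => e e0.
have [N1 HN1] := ub e e0; have [N2 HN2] := lb e e0.
exists (maxn N1 N2) => // n Nn.
have := HN1 n (leq_trans (leq_maxl _ _) Nn).
have := HN2 n (leq_trans (leq_maxr _ _) Nn); rewrite sub0r normrN ler_norml fctE; lra.
Qed.

Lemma contracting_lim_le0 x c s L :
  drift_plus_noise x c s -> cvgn s -> contracting x c -> x @ \oo --> L -> L <= 0.
Proof.
move=> hx cs h2 xL; rewrite leNgt; apply/negP => L0.
have L20 : 0 < L / 2 by rewrite divr_gt0.
have [k [k01 [kinf Hk]]] := h2 (L / 2) (2 * L) L20 ltac:(lra).
have [N0 _ HN0] := (cvgrPdist_lt _ _).1 xL _ L20.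
pose y n := x n - s n.
have [N1 HN1] := cvgn_cauchy (is_cvgB (cvgP _ xL) cs) ltr01.
pose N := (N0 + N1)%N.
have y_step n : (N < n)%N -> y n <= y n.-1 - (1 - k n) * (L / 2).
  move=> Nn; have N0n : (N0 <= n.-1)%N by nat_lia.
  have := HN0 _ N0n; rewrite /= ltr_distlC => /andP[xl xu].
  have x_pos : 0 < x n.-1 by lra.
  have x_in : L / 2 < `|x n.-1| < 2 * L by rewrite gtr0_norm //; apply/andP; lra.
  have /andP[_] := Hk n ltac:(nat_lia) x_in; rewrite ler_pdivrMr // => c_le.
  have /andP[k0 k1] := k01 n.
  have : (1 - k n) * (L / 2) <= (1 - k n) * x n.-1.
    by rewrite ler_wpM2l ?subr_ge0 //; lra.
  have n0 : (0 < n)%N by nat_lia.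
  by rewrite /y (hx n) //; lra.
suff : (\sum_(1 <= n <oo) (1 - k n)%:E < +oo)%E by rewrite kinf ltxx.
apply: (nneseries_lt_pinfty_of_tail_bounded (N := N) (B := 2 / L)).
  by move=> j; have /andP[_ ?] := k01 j; rewrite subr_ge0.
move=> t.
suff : L / 2 * \sum_(N.+1 <= j < (N + t).+1) (1 - k j) <= 1.
  by rewrite -ler_pdivlMl // mulr1 invf_div.
have y_drop : y (N + t)%N <= y N - L / 2 * \sum_(N.+1 <= j < (N + t).+1) (1 - k j).
  elim: t => [|t IH]; first by rewrite addn0 big_geq // mulr0 subr0.
  rewrite addnS big_nat_recr /=; last by nat_lia.
  by have := y_step (N + t).+1 ltac:(nat_lia); rewrite /=; lra.
have := HN1 N (N + t)%N ltac:(nat_lia) ltac:(nat_lia).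
have := ler_norm (y N - y (N + t)%N); rewrite /y in y_drop *; lra.
Qed.

Lemma contracting_cvg0 x c s : drift_plus_noise x c s -> cvgn s ->
  contracting x c -> cvgn x -> x @ \oo --> 0.
Proof.
move=> hx cs h2 /cvg_ex[L xL].
have L_le0 := contracting_lim_le0 hx cs h2 xL.
have := contracting_lim_le0 (drift_plus_noiseN hx) (is_cvgN cs)
  (contractingN h2) (cvgN xL).
rewrite oppr_le0 => L_ge0; suff L0 : L = 0 by rewrite -L0.
by apply/le_anti; rewrite L_le0 /=; exact: L_ge0.
Qed.

End trajectory.

Section almost_every_trajectory.
Context d (T : measurableType d) (R : realType) (mu : {measure set T -> \bar R}).

Lemma ae_forall_pos_nat (Q : nat -> T -> Prop) :
  (forall n, (0 < n)%N -> {ae mu, forall x, Q n x}) ->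
  {ae mu, forall x, forall n, (0 < n)%N -> Q n x}.
Proof.
move=> hQ; apply: ae_foralln => -[|n]; first exact: nearW.
by apply: filterS (hQ n.+1 isT) => x Qx _.
Qed.

Lemma ae_forall_cofinal (I : Type) (D : set I) (Q : I -> T -> Prop) (p : nat -> I) :
  (forall m, D (p m)) ->
  (forall i, D i -> exists m, forall x, Q (p m) x -> Q i x) ->
  (forall i, D i -> {ae mu, forall x, Q i x}) ->
  {ae mu, forall x, forall i, D i -> Q i x}.
Proof.
move=> Dp cofinal hQ; apply: filterS (ae_foralln (fun m => hQ _ (Dp m))).
by move=> x Qx i Di; have [m Qmi] := cofinal i Di; exact: Qmi.
Qed.

Context (X C : nat -> T -> R).

Lemma ae_almost_nonexpansive :
  (forall delta : R, 0 < delta ->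
     exists alpha : nat -> R, (forall n, 0 <= alpha n) /\
       (\sum_(1 <= n <oo) (alpha n)%:E < +oo)%E /\
       forall n, (0 < n)%N ->
         {ae mu, forall x, delta < `|X n.-1 x| ->
            0 <= C n x / X n.-1 x <= 1 + alpha n}) ->
  {ae mu, forall x, almost_nonexpansive (X ^~ x) (C ^~ x)}.
Proof.
move=> hD1; apply: (@ae_forall_cofinal R [set delta | 0 < delta]
  (fun delta x => nonexpansive_above (X ^~ x) (C ^~ x) delta) (fun m => m.+1%:R^-1)).
- by move=> m; rewrite /= invr_gt0.
- move=> delta d0; have [m m_lt] := filter_ex (near_infty_natSinv_lt (PosNum d0)).
  exists m => x [al [al0 [alfin H]]]; exists al; do 2!split => //.
  by move=> n n0 xn; apply: H n n0 (lt_trans m_lt xn).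
- move=> delta d0; have [al [al0 [alfin Hal]]] := hD1 delta d0.
  by apply: filterS (ae_forall_pos_nat Hal) => x h; exists al.
Qed.

Lemma ae_drift_small_near0 (kappa : R -> R) :
  (forall delta : R, 0 < delta -> forall n, (0 < n)%N ->
     {ae mu, forall x, 0 < `|X n.-1 x| <= delta -> `|C n x| <= kappa delta}) ->
  kappa delta @[delta --> 0^'+] --> 0 ->
  {ae mu, forall x, drift_small_near0 (X ^~ x) (C ^~ x)}.
Proof.
move=> hD4 kappa0.
have inv_gt0 m : 0 < m.+1%:R^-1 :> R by rewrite invr_gt0.
have kappa_seq0 : kappa (m.+1%:R^-1) @[m --> \oo] --> 0.
  by move/cvg_at_rightP : kappa0; apply; split; [exact: inv_gt0 | exact: cvg_harmonic].
apply: filterS (ae_foralln (fun m => ae_forall_pos_nat (hD4 _ (inv_gt0 m)))).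
move=> x hx e e0; have [m _ hm] := (cvgrPdist_le _ _).1 kappa_seq0 e e0.
exists m.+1%:R^-1 => // n n0 xn; apply: le_trans (hx m n n0 xn) _.
by have := hm m (leqnn m); rewrite /= sub0r normrN; apply: le_trans (ler_norm _).
Qed.

Lemma ae_contracting :
  (forall delta1 delta2 : R, 0 < delta1 -> delta1 < delta2 ->
     exists k : nat -> R, (forall n, 0 <= k n <= 1) /\
       (\sum_(1 <= n <oo) (1 - k n)%:E = +oo)%E /\
       forall n, (0 < n)%N ->
         {ae mu, forall x, delta1 < `|X n.-1 x| < delta2 ->
            0 <= C n x / X n.-1 x <= k n}) ->
  {ae mu, forall x, contracting (X ^~ x) (C ^~ x)}.
Proof.
move=> hD2.
suff : {ae mu, forall x, forall p : R * R, 0 < p.1 /\ p.1 < p.2 ->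
    contracting_between (X ^~ x) (C ^~ x) p.1 p.2}.
  by apply: filterS => x h d1 d2 d10 d12; exact: (h (d1, d2)).
apply: (@ae_forall_cofinal _ (fun p : R * R => 0 < p.1 /\ p.1 < p.2)
  (fun p x => contracting_between (X ^~ x) (C ^~ x) p.1 p.2)
  (fun m => (m.+1%:R^-1, m.+2%:R))).
- move=> m /=; rewrite invr_gt0 ltr0Sn; split => //.
  by apply: (@le_lt_trans _ _ 1); rewrite ?invf_le1 ?ler1n ?ltr1n ?ltr0Sn.
- move=> [d1 d2] /= [d10 d12].
  have [m [m_lt lt_m]] :=
    filter_ex (filterI (near_infty_natSinv_lt (PosNum d10)) (nbhs_infty_gtr d2)).
  exists m => x [k [k01 [kinf H]]]; exists k; do 2!split => //.
  move=> n n0 /andP[xl xu]; apply: H => //; apply/andP; split.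
    exact: lt_trans m_lt xl.
  by apply: lt_trans xu (lt_trans lt_m _); rewrite ltr_nat.
- move=> [d1 d2] /= [d10 d12]; have [k [k01 [kinf Hk]]] := hD2 d1 d2 d10 d12.
  by apply: filterS (ae_forall_pos_nat Hk) => x h; exists k.
Qed.

End almost_every_trajectory.

(* C n (n >= 1) is a version of E[X_n | F_{n-1}]; C 0 is unused. *)
Theorem theorem5 (d : measure_display) (T : measurableType d) (R : realType)
  (P : probability T R) (F : nat -> set (set T)) (X C : nat -> T -> R) :
  filtration F ->
  (forall n, G_measurable (F n) (X n)) ->
  (forall n, P.-integrable setT (EFin \o X n)) ->
  (forall n, (0 < n)%N -> is_cond_exp P (F n.-1) (X n) (C n)) ->
  (* (D1) *)
  (forall delta : R, 0 < delta ->
     exists alpha : nat -> R, (forall n, 0 <= alpha n) /\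
       (\sum_(1 <= n <oo) (alpha n)%:E < +oo)%E /\
       forall n, (0 < n)%N ->
         {ae P, forall x, delta < `|X n.-1 x| ->
            0 <= C n x / X n.-1 x <= 1 + alpha n}) ->
  (* (D4) *)
  (exists kappa : R -> R,
     (forall delta : R, 0 < delta ->
        forall n, (0 < n)%N ->
          {ae P, forall x, 0 < `|X n.-1 x| <= delta -> `|C n x| <= kappa delta})
     /\ kappa delta @[delta --> 0^'+] --> 0) ->
  (* (A3) : U_n = E[X_n | F_{n-1}] 1{X_{n-1} = 0} -> 0 a.e. *)
  {ae P, forall x, (C n.+1 x * (X n x == 0)%:R) @[n --> \oo] --> 0} ->
  (* (A4) : M_{1,n} = sum_{i=1}^n (X_i - E[X_i | F_{i-1}]) has a finite limit a.e. *)
  {ae P, forall x, cvgn (fun n => \sum_(1 <= i < n.+1) (X i x - C i x))} ->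
  {ae P, forall x, cvgn (fun n => X n x)} /\
  ((* (D2) *)
   (forall delta1 delta2 : R, 0 < delta1 -> delta1 < delta2 ->
      exists k : nat -> R, (forall n, 0 <= k n <= 1) /\
        (\sum_(1 <= n <oo) (1 - k n)%:E = +oo)%E /\
        forall n, (0 < n)%N ->
          {ae P, forall x, delta1 < `|X n.-1 x| < delta2 ->
             0 <= C n x / X n.-1 x <= k n}) ->
   {ae P, forall x, X n x @[n --> \oo] --> 0}).
Proof.
move=> _ _ _ _ hD1 [kappa [hD4 kappa0]] hA3 hA4.
have aeD1 := ae_almost_nonexpansive hD1.
have aeD4 := ae_drift_small_near0 hD4 kappa0.
have conv : {ae P, forall x, cvgn (fun n => X n x)}.
  apply: filterS (filterI aeD1 (filterI aeD4 (filterI hA3 hA4))).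
  move=> x [h1 [h4 [h3 hs]]].
  exact: cvgn_trajectory (drift_plus_noise_sum _ _) hs h1 h4 h3.
split=> // hD2.
apply: filterS (filterI conv (filterI (ae_contracting hD2) hA4)).
move=> x [hc [h2 hs]].
exact: contracting_cvg0 (drift_plus_noise_sum _ _) hs h2 hc.
Qed.
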